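(* Let $G_{\max}=(V,E_{\max})$ be a finite, simple, connected, undirected graph, and let $\lambda',\mu',\gamma'>0$ with $\frac{\lambda'}{\mu'}>1$ and $0<\gamma'\le 1$ (Regime III). For a network state $\mathbf{A}$ (a subset $E(\mathbf{A})\subseteq E_{\max}$ of closed edges) let $g(E(\mathbf{A}))$ be the number of $C_3$ subgraphs (triangles) formed by $E(\mathbf{A})$, and call a maximizer of $\pi(\mathbf{A})\propto(\lambda'/\mu')^{|E(\mathbf{A})|}\gamma'^{\,g(E(\mathbf{A}))}$ over all network states a most-probable network (for TRI-DBP). If $\lambda'\gamma'<\mu'$, then the most-probable networks are exactly the network states $\mathbf{A}^*$ with $g(E(\mathbf{A}^* ))=0$ and $|E(\mathbf{A}^* )|$ maximum among such states; equivalently, $(V,E(\mathbf{A}^* ))$ is a largest possible (maximum number of edges) triangle-free subgraph of $G_{\max}$. *)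

From HB Require Import structures.
From mathcomp Require Import all_boot all_order all_algebra.
Set Implicit Arguments. Unset Strict Implicit. Unset Printing Implicit Defensive.
Import Order.TTheory GRing.Theory Num.Theory.

Definition simple_graph (V : finType) (e : rel V) : Prop :=
  symmetric e /\ irreflexive e.

Definition connected_graph (V : finType) (e : rel V) : Prop :=
  forall x y : V, connect e x y.

Definition edges (V : finType) (e : rel V) : {set {set V}} :=
  [set E : {set V} | [exists x, exists y, e x y && (E == [set x; y])]].

(* A network state: a set of closed edges, i.e. a subset of E_max. *)
Definition network_state (V : finType) (e : rel V) (A : {set {set V}}) : Prop :=
  A \subset edges e.

Definition triangles (V : finType) (A : {set {set V}}) : {set {set V}} :=
  [set T : {set V} | (#|T| == 3) &&
     [forall x in T, forall y in T, (x != y) ==> ([set x; y] \in A)]].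

Definition g (V : finType) (A : {set {set V}}) : nat := #|triangles A|.

Local Open Scope ring_scope.

Definition weight (R : realFieldType) (lam mu gam : R) (V : finType)
  (A : {set {set V}}) : R :=
  (lam / mu) ^+ #|A| * gam ^+ g A.

Definition most_probable (R : realFieldType) (lam mu gam : R) (V : finType)
  (e : rel V) (A : {set {set V}}) : Prop :=
  network_state e A /\
  forall B, network_state e B -> weight lam mu gam B <= weight lam mu gam A.

From mathcomp Require Import all_boot all_order all_algebra.
Import Order.TTheory GRing.Theory Num.Theory.

Set Implicit Arguments.
Unset Strict Implicit.
Unset Printing Implicit Defensive.

(* Deleting one edge from every triangle of B leaves a triangle-free subgraph
   that has lost at most g(B) edges.  Each triangle therefore costs at least a
   factor (lam/mu) * gam < 1 in the weight compared with that subgraph, so any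
   state with a triangle is beaten by a triangle-free one; among triangle-free
   states the weight (lam/mu)^|E| grows with the number of edges. *)

Lemma triangles_subset (V : finType) (B B' : {set {set V}}) :
  B' \subset B -> triangles B' \subset triangles B.
Proof.
move=> sB'B; apply/subsetP => T; rewrite !inE => /andP[-> /= /forall_inP HT].
apply/forall_inP => x xT; apply/forall_inP => y yT; apply/implyP => nxy.
by apply: (subsetP sB'B); move/forall_inP: (HT x xT) => /(_ y yT)/implyP; apply.
Qed.

Lemma triangle_has_edge (V : finType) (B : {set {set V}}) (T : {set V}) :
  T \in triangles B -> exists2 E, E \in B & E \subset T.
Proof.
rewrite inE => /andP[/eqP T3 /forall_inP HT].
have /card_gt1P[x [y [xT yT nxy]]] : (1 < #|T|)%N by rewrite T3.
exists [set x; y]; first by move/forall_inP: (HT x xT) => /(_ y yT)/implyP; apply.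
by apply/subsetP => z; rewrite !inE => /orP[]/eqP->.
Qed.

Lemma edges_card2 (V : finType) (e : rel V) (E : {set V}) :
  irreflexive e -> E \in edges e -> #|E| == 2.
Proof.
move=> irr; rewrite inE => /existsP[x /existsP[y /andP[exy /eqP ->]]].
apply/cards2P; exists x, y; split=> //.
by apply: contraTneq exy => ->; rewrite irr.
Qed.

Lemma destroy_triangles (V : finType) (B : {set {set V}}) :
  {in B, forall E : {set V}, #|E| == 2} ->
  exists B' : {set {set V}},
    [/\ B' \subset B, g B' = 0%N & (#|B| <= #|B'| + g B)%N].
Proof.
move=> B2.
pose chosen_edge (T : {set V}) := odflt set0 [pick E in B | E \subset T].
pose D := chosen_edge @: triangles B.
exists (B :\: D); split; first exact: subsetDl.
- apply/eqP; rewrite cards_eq0; apply/eqP/setP => T; rewrite in_set0.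
  apply/negbTE/negP => HT.
  have TB : T \in triangles B := subsetP (triangles_subset (subsetDl B D)) _ HT.
  have chosenD : chosen_edge T \in D := imset_f _ TB.
  rewrite /chosen_edge in chosenD; case: pickP chosenD => [E /andP[EB ET]|none] /= ED.
    have /cards2P[x [y [nxy Exy]]] := B2 E EB.
    have xT : x \in T by apply: (subsetP ET); rewrite Exy !inE eqxx.
    have yT : y \in T by apply: (subsetP ET); rewrite Exy !inE eqxx orbT.
    move: HT; rewrite inE => /andP[_ /forall_inP/(_ x xT)/forall_inP/(_ y yT)].
    move/implyP/(_ nxy).
    by rewrite -Exy !inE ED.
  have [E EB ET] := triangle_has_edge TB.
  by move: (none E); rewrite EB ET.
- rewrite -(cardsID D B) addnC leq_add2l.
  apply: leq_trans (subset_leq_card (subsetIr B D)) _.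
  exact: leq_imset_card.
Qed.

Local Open Scope ring_scope.

Lemma weight_triangle_free (R : realFieldType) (lam mu gam : R) (V : finType)
    (B : {set {set V}}) :
  g B = 0%N -> weight lam mu gam B = (lam / mu) ^+ #|B|.
Proof. by move=> gB0; rewrite /weight gB0 expr0 mulr1. Qed.

Lemma triangle_free_dominates (R : realFieldType) (lam mu gam : R)
    (V : finType) (e : rel V) (B : {set {set V}}) :
  irreflexive e -> 1 <= lam / mu -> 0 <= gam -> lam / mu * gam < 1 ->
  network_state e B ->
  exists B' : {set {set V}},
    [/\ network_state e B', g B' = 0%N,
        weight lam mu gam B <= weight lam mu gam B' &
        (0 < g B)%N -> weight lam mu gam B < weight lam mu gam B'].
Proof.
move=> irr r1 gam0 q1 nB.
have [B' [sB'B gB'0 cardB]] : exists B' : {set {set V}},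
    [/\ B' \subset B, g B' = 0%N & (#|B| <= #|B'| + g B)%N].
  by apply: destroy_triangles => E /(subsetP nB); apply: edges_card2.
have q0 : 0 <= lam / mu * gam by rewrite mulr_ge0 // (le_trans ler01).
have rB'0 : 0 < (lam / mu) ^+ #|B'| by rewrite exprn_gt0 // (lt_le_trans ltr01).
have weightB : weight lam mu gam B <= (lam / mu) ^+ #|B'| * (lam / mu * gam) ^+ g B.
  rewrite /weight [X in _ <= _ * X]exprMn mulrA -exprD ler_wpM2r ?exprn_ge0 //.
  exact: ler_weXn2l.
exists B'; rewrite (weight_triangle_free _ _ _ gB'0); split.
- exact: subset_trans sB'B nB.
- by [].
- apply: le_trans weightB _; rewrite ler_piMr ?(ltW rB'0) //.
  exact: exprn_ile1 q0 (ltW q1).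
- move=> gB_gt0; apply: le_lt_trans weightB _; rewrite gtr_pMr //.
  by rewrite exprn_ilt1 // -lt0n gB_gt0.
Qed.

Theorem theorem7 (R : realFieldType) (V : finType) (e : rel V)
  (lam mu gam : R) :
  simple_graph e -> connected_graph e ->
  0 < lam -> 0 < mu -> 0 < gam ->
  1 < lam / mu -> gam <= 1 ->
  lam * gam < mu ->
  forall A : {set {set V}},
    most_probable lam mu gam e A <->
    [/\ network_state e A, g A = 0%N &
        forall B, network_state e B -> g B = 0%N -> (#|B| <= #|A|)%N].
Proof.
move=> [_ irr] _ _ mu0 gam0 r1 _ lam_gam A.
have q1 : lam / mu * gam < 1 by rewrite mulrAC ltr_pdivrMr // mul1r.
have dominates := triangle_free_dominates irr (ltW r1) (ltW gam0) q1.
split.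
- move=> [nA maxA].
  have gA0 : g A = 0%N.
    apply/eqP; rewrite -leqn0 leqNgt; apply/negP => gA_gt0.
    have [B' [nB' _ _ /(_ gA_gt0)]] := dominates A nA.
    by rewrite ltNge maxA.
  split=> // B nB gB0.
  by have := maxA B nB; rewrite !weight_triangle_free // ler_eXn2l.
- move=> [nA gA0 maxA]; split=> // B nB.
  have [B' [nB' gB'0 leBB' _]] := dominates B nB.
  apply: le_trans leBB' _.
  by rewrite !weight_triangle_free // ler_eXn2l // maxA.
Qed.
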